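(* Let $\mathcal{H}$ be a finite hypothesis class and let $k\ge0$, $l\ge0$ be integers with $k\ge l$. Then \[ \mathrm{ELdim}(\mathcal{H}^l,k)\le e(k+1)\,|\mathcal{H}|^{\frac{1}{k+1-l}}. \]
   Context: Hypotheses are maps $\mathcal{X}\to\{-1,+1\}$. $\mathcal{C}^l$ is the class of functions $x\mapsto1-2I(x\in D)$ with $D\subseteq\mathcal{X}$, $|D|\le l$; $\mathcal{H}^l=\{x\mapsto h(x)c(x):h\in\mathcal{H},c\in\mathcal{C}^l\}$. Extended mistake tree w.r.t. a class $\mathcal{F}$: a finite full binary tree (possibly a single leaf) in which each internal node $v$ is labeled by a point $x_v\in\mathcal{X}$ and has two solid downward edges, to its left child (label $-1$) and right child (label $+1$), plus one dashed downward edge going to one of its two children; each leaf is labeled by some $h\in\mathcal{F}$ with $h(x_v)$ equal to the direction label ($-1$ left, $+1$ right) at every internal node $v$ on the path from the root to that leaf. A root-to-leaf path chooses at each internal node one of its downward edges; its length is its number of edges. The tree is $(k,m)$-difficult if every root-to-leaf path using at most $k$ solid edges has length at least $m$. The extended Littlestone dimension $\mathrm{ELdim}(\mathcal{F},k)$ is the supremum of $m$ such that a $(k,m)$-difficult extended mistake tree w.r.t. $\mathcal{F}$ exists (possibly $\infty$). *)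

From Stdlib Require Import Reals List Arith.
Open Scope R_scope.

(* Hypotheses X -> {-1,+1} are encoded as X -> bool, with true = +1, false = -1.
   A hypothesis class is a predicate on hypotheses. *)
Definition hclass (X : Type) := (X -> bool) -> Prop.

(* H^l = { x |-> h(x) c(x) : h in H, c in C^l }, where c = 1 - 2 I(x in D),
   |D| <= l.  A set D of size <= l is given as a list of length <= l;
   multiplying by c flips the sign exactly on D. *)
Definition Hl {X : Type} (H : hclass X) (l : nat) : hclass X :=
  fun g => exists h, H h /\ exists D : list X, (length D <= l)%nat /\
    forall x, (In x D -> g x = negb (h x)) /\ (~ In x D -> g x = h x).

(* Extended mistake trees: a leaf labeled by a hypothesis, or an internal node
   labeled by a point x, with a dashed-edge direction d (false = dashed edge
   to the left child, true = to the right child), and left/right children. *)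
Inductive emtree (X : Type) : Type :=
| Leaf : (X -> bool) -> emtree X
| Node : X -> bool -> emtree X -> emtree X -> emtree X.
Arguments Leaf {X}.
Arguments Node {X}.

(* Leaf labels: every leaf is labeled by some h in F with h(x_v) equal to the
   direction label (left = -1 = false, right = +1 = true) at every internal
   node v on its root path.  [cs] collects the (x_v, direction) pairs. *)
Fixpoint emtree_ok_aux {X : Type} (F : hclass X) (t : emtree X)
    (cs : list (X * bool)) : Prop :=
  match t with
  | Leaf h => F h /\ Forall (fun p => h (fst p) = snd p) cs
  | Node x _ L R => emtree_ok_aux F L ((x, false) :: cs) /\
                    emtree_ok_aux F R ((x, true) :: cs)
  end.

Definition emtree_wrt {X : Type} (F : hclass X) (t : emtree X) : Prop :=
  emtree_ok_aux F t nil.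

Inductive rpath {X : Type} : emtree X -> nat -> nat -> Prop :=
| rp_leaf (h : X -> bool) : rpath (Leaf h) 0 0
| rp_solidL (x : X) (d : bool) (L R : emtree X) (j n : nat) : rpath L j n -> rpath (Node x d L R) (S j) (S n)
| rp_solidR (x : X) (d : bool) (L R : emtree X) (j n : nat) : rpath R j n -> rpath (Node x d L R) (S j) (S n)
| rp_dashed (x : X) (d : bool) (L R : emtree X) (j n : nat) :
    rpath (if d then R else L) j n -> rpath (Node x d L R) j (S n).

Definition difficult {X : Type} (t : emtree X) (k m : nat) : Prop :=
  forall j n, rpath t j n -> (j <= k)%nat -> (m <= n)%nat.

(* ELdim(F,k) <= b  (b real), i.e. the supremum of the m for which a
   (k,m)-difficult extended mistake tree w.r.t. F exists is at most b. *)
Definition ELdim_le {X : Type} (F : hclass X) (k : nat) (b : R) : Prop :=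
  forall m : nat, (exists t, emtree_wrt F t /\ difficult t k m) -> INR m <= b.

Definition fin_class {X : Type} (n : nat) (h : nat -> X -> bool) : hclass X :=
  fun g => exists i, (i < n)%nat /\ g = h i.

Definition inj_below {X : Type} (n : nat) (h : nat -> X -> bool) : Prop :=
  forall i j, (i < n)%nat -> (j < n)%nat -> h i = h j -> i = j.

(* n^y for a natural n >= 0 and real y > 0 (0^y = 0). *)
Definition natpow (n : nat) (y : R) : R :=
  match n with O => 0 | _ => Rpower (INR n) y end.

(* Write Φ_s(m) = Σ_{i ≤ s} C(m,i).  Along a root path of an extended mistake
   tree, give each h in H that disagrees with the labels of the path at c ≤ l
   points the weight Φ_{l-c}(m'), m' being the depth still required below.
   Pascal's rule makes the total weight at a node the sum of the weights at its
   children, and one child is reached by a solid edge, the other by the dashed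
   one; so by induction a subtree in which every path with fewer than K solid
   edges has length at least m' carries weight at least Φ_K(m').  The points of
   a root path are distinct and each leaf is labelled by some h·c with |D| ≤ l,
   so h keeps a positive weight.  At the root this gives
   Φ_{k+1}(m) ≤ n Φ_l(m).  Since Φ_{j+1}(m) ≥ (m/(e(k+1))) Φ_j(m) for j ≤ k, we
   get (m/(e(k+1)))^{k+1-l} ≤ n. *)

From Stdlib Require Import Reals List Arith Lra Lia Classical.
Open Scope R_scope.

(* [sum_binom m s] is Σ_{i ≤ s} C(m,i), defined by Pascal's rule. *)
Fixpoint sum_binom (m s : nat) : nat :=
  match m, s with
  | O, _ | _, O => 1
  | S m', S s' => sum_binom m' (S s') + sum_binom m' s'
  end.

Lemma sum_binom_pos m s : (1 <= sum_binom m s)%nat.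
Proof. revert s; induction m; intros [|s]; simpl; try lia. specialize (IHm (S s)); lia. Qed.

Lemma sum_binom_0 m : sum_binom m 0 = 1%nat.
Proof. now destruct m. Qed.

Lemma sum_binom_le_succ m s : (sum_binom m s <= sum_binom m (S s))%nat.
Proof.
  revert s; induction m; intros s; simpl; [lia|].
  destruct s; [pose proof (sum_binom_pos m 1); lia|].
  pose proof (IHm (S s)); pose proof (IHm s); lia.
Qed.

Lemma sum_binom_step m j : ((m - j) * sum_binom m j <= S j * sum_binom m (S j))%nat.
Proof.
  revert j; induction m; intros j; simpl; [lia|].
  destruct j as [|j].
  - specialize (IHm 0%nat). rewrite sum_binom_0 in *. lia.
  - pose proof (IHm (S j)) as IH1. pose proof (IHm j) as IH2.
    replace (S m - S j)%nat with (m - j)%nat by lia.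
    destruct (le_lt_dec m j).
    + replace (m - j)%nat with 0%nat by lia. lia.
    + replace (m - S j)%nat with (m - j - 1)%nat in IH1 by lia.
      replace (m - j)%nat with (S (m - j - 1)) in * by lia. nia.
Qed.

Fixpoint nsum (f : nat -> nat) (n : nat) : nat :=
  match n with O => 0 | S n' => nsum f n' + f n' end.

Lemma nsum_le_term f n i : (i < n)%nat -> (f i <= nsum f n)%nat.
Proof.
  induction n; intros Hi; simpl; [lia|].
  destruct (Nat.eq_dec i n); [subst; lia|]. specialize (IHn ltac:(lia)); lia.
Qed.

Lemma nsum_add f g n : (nsum f n + nsum g n)%nat = nsum (fun i => f i + g i)%nat n.
Proof. induction n; simpl; lia. Qed.

Lemma nsum_ext f g n : (forall i, f i = g i) -> nsum f n = nsum g n.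
Proof. intros E; induction n; simpl; auto. Qed.

Lemma nsum_const c n : nsum (fun _ => c) n = (n * c)%nat.
Proof. induction n; simpl; lia. Qed.

Fixpoint disagreements {X : Type} (g : X -> bool) (cs : list (X * bool)) : nat :=
  match cs with
  | nil => 0
  | (x, b) :: cs' => (if Bool.eqb (g x) b then 0 else 1) + disagreements g cs'
  end.

Lemma disagreements_le_length {X : Type} (g : X -> bool) (cs : list (X * bool))
    (D : list X) :
  NoDup (map fst cs) ->
  (forall x b, In (x, b) cs -> g x <> b -> In x D) ->
  (disagreements g cs <= length D)%nat.
Proof.
  revert D; induction cs as [|[x b] cs IH]; intros D ND HD; simpl; [lia|].
  inversion ND as [|? ? Hx ND']; subst.
  destruct (Bool.eqb (g x) b) eqn:E.
  - apply IH; auto. intros y c Hy. apply HD; simpl; auto.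
  - assert (Hin : In x D).
    { apply (HD x b); simpl; auto. intros C. rewrite C, Bool.eqb_reflx in E. discriminate. }
    destruct (in_split _ _ Hin) as [D1 [D2 ->]].
    assert (Hrest : (disagreements g cs <= length (D1 ++ D2))%nat).
    { apply IH; auto. intros y c Hy Hne.
      assert (HyD : In y (D1 ++ x :: D2)) by (apply (HD y c); simpl; auto).
      apply in_app_or in HyD. apply in_or_app.
      destruct HyD as [?|[<-|?]]; auto.
      exfalso. apply Hx. exact (in_map fst _ _ Hy). }
    rewrite length_app in *. simpl. lia.
Qed.

Section Potential.
Variables (X : Type) (n : nat) (h : nat -> X -> bool) (l : nat).
Let F := Hl (fin_class n h) l.

Lemma emtree_ok_consistent (t : emtree X) (cs : list (X * bool)) :
  emtree_ok_aux F t cs -> exists g, Forall (fun p => g (fst p) = snd p) cs.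
Proof.
  revert cs; induction t as [g|x d L IHL R _]; intros cs Hok; simpl in Hok.
  - exists g; tauto.
  - destruct (IHL _ (proj1 Hok)) as [g Hg]. inversion Hg; subst. eauto.
Qed.

Lemma emtree_ok_node_fresh x d L R cs :
  emtree_ok_aux F (Node x d L R) cs -> ~ In x (map fst cs).
Proof.
  intros [HL HR] Hin.
  destruct (emtree_ok_consistent _ _ HL) as [gL GL].
  destruct (emtree_ok_consistent _ _ HR) as [gR GR].
  inversion GL as [|? ? GLx GL']; inversion GR as [|? ? GRx GR']; subst; simpl in *.
  apply in_map_iff in Hin. destruct Hin as [[y b] [Hy Hp]]. simpl in Hy; subst.
  rewrite Forall_forall in GL', GR'.
  specialize (GL' _ Hp). specialize (GR' _ Hp). simpl in *. congruence.
Qed.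

Lemma leaf_survivor g cs :
  F g -> Forall (fun p => g (fst p) = snd p) cs -> NoDup (map fst cs) ->
  exists i, (i < n)%nat /\ (disagreements (h i) cs <= l)%nat.
Proof.
  intros [h0 [[i [Hi ->]] [D [HD Hflip]]]] Hg ND.
  exists i; split; auto.
  eapply Nat.le_trans; [|exact HD]. apply disagreements_le_length; auto.
  intros x b Hxb Hne. rewrite Forall_forall in Hg. specialize (Hg _ Hxb); simpl in Hg.
  destruct (classic (In x D)) as [?|HxD]; auto.
  exfalso. apply Hne. rewrite <- Hg. symmetry. exact (proj2 (Hflip x) HxD).
Qed.

Lemma emtree_ok_survivor t cs :
  emtree_ok_aux F t cs -> NoDup (map fst cs) ->
  exists i, (i < n)%nat /\ (disagreements (h i) cs <= l)%nat.
Proof.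
  revert cs; induction t as [g|x d L IHL R _]; intros cs Hok ND.
  - destruct Hok. eapply leaf_survivor; eauto.
  - pose proof (emtree_ok_node_fresh _ _ _ _ _ Hok) as Fr.
    destruct (IHL _ (proj1 Hok)) as [i [Hi Hd]]; [simpl; constructor; auto|].
    exists i; split; auto. simpl in Hd. lia.
Qed.

Definition weight (m c : nat) : nat :=
  if (c <=? l)%nat then sum_binom m (l - c) else 0.

Definition potential (m : nat) (cs : list (X * bool)) : nat :=
  nsum (fun i => weight m (disagreements (h i) cs)) n.

Lemma weight_pascal m c : (weight m c + weight m (S c))%nat = weight (S m) c.
Proof.
  unfold weight.
  destruct (Nat.leb_spec c l); destruct (Nat.leb_spec (S c) l); try lia.
  - replace (l - c)%nat with (S (l - S c)) by lia. simpl. lia.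
  - replace (l - c)%nat with 0%nat by lia. rewrite !sum_binom_0. lia.
Qed.

Lemma potential_pos m cs :
  (exists i, (i < n)%nat /\ (disagreements (h i) cs <= l)%nat) ->
  (1 <= potential m cs)%nat.
Proof.
  intros [i [Hi Hd]]. eapply Nat.le_trans; [|exact (nsum_le_term _ _ _ Hi)].
  unfold weight. destruct (Nat.leb_spec (disagreements (h i) cs) l); try lia.
  apply sum_binom_pos.
Qed.

Lemma potential_split m x cs :
  (potential m ((x, false) :: cs) + potential m ((x, true) :: cs))%nat
  = potential (S m) cs.
Proof.
  unfold potential. rewrite nsum_add. apply nsum_ext. intros i. simpl.
  destruct (h i x); simpl; rewrite <- weight_pascal; lia.
Qed.

Lemma potential_root m : potential m nil = (n * sum_binom m l)%nat.
Proof.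
  unfold potential, weight. simpl. rewrite Nat.sub_0_r. apply nsum_const.
Qed.

Lemma sum_binom_le_potential t cs K m :
  emtree_ok_aux F t cs -> NoDup (map fst cs) ->
  (forall j len, rpath t j len -> (j < K)%nat -> (m <= len)%nat) ->
  (sum_binom m K <= potential m cs)%nat.
Proof.
  revert cs K m; induction t as [g|x d L IHL R IHR]; intros cs K m Hok ND Hdiff.
  all: pose proof (potential_pos m cs (emtree_ok_survivor _ _ Hok ND)) as Hpos.
  all: destruct K as [|K]; [rewrite sum_binom_0; exact Hpos|].
  all: destruct m as [|m]; [simpl; exact Hpos|].
  - assert (S m <= 0)%nat by (apply (Hdiff 0%nat 0%nat); [constructor|lia]). lia.
  - pose proof (emtree_ok_node_fresh _ _ _ _ _ Hok) as Fr.
    destruct Hok as [HL HR].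
    assert (NDL : NoDup (map fst ((x, false) :: cs))) by (simpl; constructor; auto).
    assert (NDR : NoDup (map fst ((x, true) :: cs))) by (simpl; constructor; auto).
    assert (Hdashed : forall j len, rpath (if d then R else L) j len ->
              (j < S K)%nat -> (m <= len)%nat).
    { intros j len Hp Hj. specialize (Hdiff j (S len) (rp_dashed _ _ _ _ _ _ Hp) Hj). lia. }
    assert (HsolidL : forall j len, rpath L j len -> (j < K)%nat -> (m <= len)%nat).
    { intros j len Hp Hj. specialize (Hdiff _ _ (rp_solidL x d _ R _ _ Hp) ltac:(lia)). lia. }
    assert (HsolidR : forall j len, rpath R j len -> (j < K)%nat -> (m <= len)%nat).
    { intros j len Hp Hj. specialize (Hdiff _ _ (rp_solidR x d L _ _ _ Hp) ltac:(lia)). lia. }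
    rewrite <- (potential_split m x cs). simpl sum_binom.
    destruct d.
    + pose proof (IHR _ _ _ HR NDR Hdashed). pose proof (IHL _ _ _ HL NDL HsolidL). lia.
    + pose proof (IHL _ _ _ HL NDL Hdashed). pose proof (IHR _ _ _ HR NDR HsolidR). lia.
Qed.

End Potential.

Lemma sum_binom_growth m j r : 0 <= r ->
  r <= 1 \/ r * INR (S j) <= INR m - INR j ->
  r * INR (sum_binom m j) <= INR (sum_binom m (S j)).
Proof.
  intros r0 [Hr|Hr].
  - pose proof (le_INR _ _ (sum_binom_le_succ m j)).
    pose proof (pos_INR (sum_binom m j)). nra.
  - assert (Hj : (j <= m)%nat).
    { pose proof (pos_INR (S j)). rewrite S_INR in *.
      apply INR_le. nra. }
    pose proof (le_INR _ _ (sum_binom_step m j)) as Hstep.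
    rewrite !mult_INR, minus_INR in Hstep by exact Hj.
    pose proof (pos_INR (sum_binom m j)).
    assert (HSj : 0 < INR (S j)) by apply lt_0_INR, Nat.lt_0_succ.
    apply Rmult_le_reg_l with (INR (S j)); [exact HSj|]. nra.
Qed.

Lemma e_gt_2 : 2 < exp 1.
Proof. pose proof (exp_ineq1 1 ltac:(lra)). lra. Qed.

Lemma growth_rate_nonneg m k : 0 <= INR m / (exp 1 * INR (k + 1)).
Proof.
  pose proof e_gt_2. assert (0 < INR (k + 1)) by (apply lt_0_INR; lia).
  apply Rle_mult_inv_pos; [apply pos_INR | nra].
Qed.

(* Either the rate is at most 1, or m > e(k+1) > 2(k+1) and then
   r (j+1) ≤ r (k+1) = m/e ≤ m/2 ≤ m - j. *)
Lemma growth_rate_admissible m k j : (j <= k)%nat ->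
  let r := INR m / (exp 1 * INR (k + 1)) in
  r <= 1 \/ r * INR (S j) <= INR m - INR j.
Proof.
  intros Hj r. pose proof e_gt_2.
  assert (Kpos : 0 < INR (k + 1)) by (apply lt_0_INR; lia).
  assert (Hjk : INR (S j) <= INR (k + 1)) by (apply le_INR; lia).
  rewrite S_INR in Hjk.
  destruct (Rle_dec r 1) as [?|Hr]; [now left|right]. apply Rnot_le_lt in Hr.
  assert (Hrk : r * INR (k + 1) = INR m / exp 1) by (unfold r; field; lra).
  assert (Hm : exp 1 * INR (k + 1) < INR m).
  { assert (INR m = exp 1 * INR (k + 1) * r) by (unfold r; field; lra).
    assert (0 < exp 1 * INR (k + 1)) by nra. nra. }
  assert (Hme : INR m / exp 1 <= INR m / 2).
  { apply Rmult_le_compat_l; [apply pos_INR|]. apply Rinv_le_contravar; lra. }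
  pose proof (growth_rate_nonneg m k) as r0. fold r in r0. rewrite S_INR. nra.
Qed.

Lemma sum_binom_growth_iter m k s p : (s + p <= S k)%nat ->
  (INR m / (exp 1 * INR (k + 1))) ^ p * INR (sum_binom m s)
  <= INR (sum_binom m (s + p)).
Proof.
  induction p as [|p IH]; intros Hp.
  - rewrite Nat.add_0_r. simpl. lra.
  - pose proof (growth_rate_nonneg m k) as r0.
    specialize (IH ltac:(lia)).
    replace (s + S p)%nat with (S (s + p)) by lia.
    pose proof (sum_binom_growth m (s + p) _ r0
                  (growth_rate_admissible m k (s + p) ltac:(lia))).
    simpl. nra.
Qed.

Lemma le_natpow_of_pow_le (r : R) (n p : nat) : 0 <= r -> (0 < p)%nat ->
  r ^ p <= INR n -> r <= natpow n (1 / INR p).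
Proof.
  intros r0 Hp Hrn.
  assert (P0 : 0 < INR p) by (apply lt_0_INR; exact Hp).
  destruct n as [|n'].
  - simpl in *. destruct r0 as [r0|<-]; [|lra].
    pose proof (pow_lt r p r0). lra.
  - unfold natpow. destruct r0 as [r0|<-]; [|left; apply exp_pos].
    replace r with (Rpower (r ^ p) (1 / INR p)) at 1.
    + apply Rle_Rpower_l; [left; apply Rdiv_lt_0_compat; lra|].
      split; [apply pow_lt|]; assumption.
    + rewrite <- Rpower_pow, Rpower_mult by exact r0.
      replace (INR p * (1 / INR p)) with 1 by (field; lra). apply Rpower_1, r0.
Qed.

Lemma depth_bound_of_sum_binom m k l n : (l <= k)%nat ->
  (sum_binom m (S k) <= n * sum_binom m l)%nat ->
  INR m <= exp 1 * INR (k + 1) * natpow n (1 / INR (k + 1 - l)).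
Proof.
  intros Hlk HB.
  pose proof e_gt_2. assert (Kpos : 0 < INR (k + 1)) by (apply lt_0_INR; lia).
  set (r := INR m / (exp 1 * INR (k + 1))).
  assert (Hm : INR m = exp 1 * INR (k + 1) * r) by (unfold r; field; lra).
  pose proof (sum_binom_growth_iter m k l (k + 1 - l) ltac:(lia)) as Hgrowth.
  replace (l + (k + 1 - l))%nat with (S k) in Hgrowth by lia. fold r in Hgrowth.
  apply le_INR in HB. rewrite mult_INR in HB.
  pose proof (le_INR _ _ (sum_binom_pos m l)).
  rewrite Hm. apply Rmult_le_compat_l; [nra|].
  apply le_natpow_of_pow_le; [apply growth_rate_nonneg | lia | simpl in *; nra].
Qed.

Theorem mainTheorem5 (X : Type) (n : nat) (h : nat -> X -> bool)
  (hinj : inj_below n h) (k l : nat) (hkl : (l <= k)%nat) :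
  ELdim_le (Hl (fin_class n h) l) k
    (exp 1 * INR (k + 1) * natpow n (1 / INR (k + 1 - l))).
Proof.
  intros m [t [Hok Hdiff]].
  apply depth_bound_of_sum_binom; [exact hkl|].
  rewrite <- (potential_root X n h l m).
  apply (sum_binom_le_potential X n h l t nil (S k) m Hok (NoDup_nil _)).
  intros j len Hp Hj. apply (Hdiff j len Hp). lia.
Qed.
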